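(* Let $n\ge1$ and let $G$ be a nontrivial compact group with trivial center. Then $d^{(n)}(G)\le\frac{2^n-1}{2^n}$.
   Context: For a compact group $X$, $\mu_X$ denotes its normalized Haar measure and $\mu_X^m$ the product measure on $X^m$. Commutators: $[x,y]=x^{-1}y^{-1}xy$, $[x_1,\dots,x_{k+1}]=[[x_1,\dots,x_k],x_{k+1}]$. For a compact group $X$, $d^{(n)}(X)=\mu_X^{n+1}(\{(x_1,\dots,x_{n+1})\in X^{n+1}: [x_1,\dots,x_{n+1}]=1\})$. *)

From HB Require Import structures.
From mathcomp Require Import all_boot all_order all_algebra.
From mathcomp Require Import all_classical all_reals all_analysis.
Set Implicit Arguments. Unset Strict Implicit. Unset Printing Implicit Defensive.
Import Order.TTheory GRing.Theory Num.Theory.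
Local Open Scope classical_set_scope.
Local Open Scope ring_scope.

Definition borel (X : topologicalType) : set (set X) := <<s open >>.

Record compact_group (G : topologicalType) (mul : G -> G -> G) (inv : G -> G)
    (e : G) : Prop := CompactGroup {
  cg_mulA : associative mul;
  cg_mul1 : left_id e mul;
  cg_mulV : forall x, mul (inv x) x = e;
  cg_hausdorff : hausdorff_space G;
  cg_compact : compact [set: G];
  cg_mul_cont : continuous (fun p : G * G => mul p.1 p.2);
  cg_inv_cont : continuous inv }.

Record haar_probability (R : realType) (X : topologicalType)
    (mul : X -> X -> X) (mu : set X -> \bar R) : Prop := HaarProbability {
  haar0 : mu set0 = 0%E;
  haar_ge0 : forall A, borel A -> (0 <= mu A)%E;
  haar_sigma_additive : forall F : nat -> set X,
    (forall i, borel (F i)) -> trivIset setT F ->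
    (fun k => \sum_(0 <= i < k) mu (F i))%E @ \oo --> mu (\bigcup_i F i);
  haarT : mu setT = 1%E;
  haar_left_invariant : forall x A, borel A ->
    mu [set mul x y | y in A] = mu A;
  haar_inner_regular : forall A, borel A ->
    mu A = ereal_sup [set mu K | K in [set K | compact K /\ K `<=` A]] }.

Definition commg (G : Type) (mul : G -> G -> G) (inv : G -> G) (x y : G) : G :=
  mul (mul (mul (inv x) (inv y)) x) y.

Definition itercomm (G : Type) (mul : G -> G -> G) (inv : G -> G) (e : G)
    (s : seq G) : G :=
  match s with
  | [::] => e
  | x :: t => foldl (commg mul inv) x t
  end.

Definition power_group (G : topologicalType) (m : nat) : topologicalType :=
  {ptws 'I_m -> G}.

Definition pmul (G : topologicalType) (m : nat) (mul : G -> G -> G)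
    (f g : power_group G m) : power_group G m := fun i => mul (f i) (g i).

Definition comm_set (G : topologicalType) (mul : G -> G -> G) (inv : G -> G)
    (e : G) (n : nat) : set (power_group G n.+1) :=
  [set x | itercomm mul inv e [seq x i | i <- enum 'I_n.+1] = e].

From Pilot Require Import Defs.
From HB Require Import structures.
From mathcomp Require Import all_boot all_order all_algebra.
From mathcomp Require Import all_classical all_reals all_analysis.
From mathcomp Require Import all_fingroup.
From mathcomp Require Import lra zify.
Import Order.TTheory GRing.Theory Num.Theory.
Local Open Scope classical_set_scope.
Local Open Scope ring_scope.
Set Implicit Arguments. Unset Strict Implicit. Unset Printing Implicit Defensive.

(* Let P_k be the set of tuples with [x_0, ..., x_k] = 1, so that the
   probability in question is mu(P_n), and P_(k-1) is contained in P_k.  Off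
   P_(k-1) the commutator c = [x_0, ..., x_(k-1)] is nontrivial, hence not
   central: [c, b] <> 1 for some b.  Multiplying the k-th coordinate by b maps
   the part of P_k where [c, b] <> 1 onto a disjoint set of the same Haar
   measure; inner regularity and compactness reduce to finitely many b.  So P_k
   fills at most half of the complement of P_(k-1), i.e.
   1 - mu(P_k) >= (1 - mu(P_(k-1))) / 2, and it remains to show mu(P_1) <= 1/2.
   If G is infinite, points are null, so mu(P_0) = 0 and the same step applies.
   If G is finite, mu(P_1) = k(G) / |G| with k(G) the number of conjugacy
   classes, and 2 k(G) <= |G| because every nontrivial class has at least two
   elements and its size divides |G|. *)

Section GroupAxioms.
Context {T : Type} (mul : T -> T -> T) (inv : T -> T) (e : T).
Hypotheses (mulA : associative mul) (mul1 : left_id e mul)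
  (mulV : forall x, mul (inv x) x = e).

Lemma gmulKg x y : mul (inv x) (mul x y) = y.
Proof. by rewrite mulA mulV mul1. Qed.

Lemma gmulgV x : mul x (inv x) = e.
Proof.
have h : mul (mul (inv (inv x)) (inv x)) (mul x (inv x)) = e.
  by rewrite -(mulA (inv (inv x))) (gmulKg x (inv x)) mulV.
by rewrite mulV mul1 in h.
Qed.

Lemma gmulg1 x : mul x e = x.
Proof. by rewrite -(mulV x) mulA gmulgV mul1. Qed.

Lemma gmulgI x y z : mul y x = mul z x -> y = z.
Proof.
by move=> h; rewrite -[y]gmulg1 -[z]gmulg1 -(gmulgV x) !mulA h.
Qed.

Lemma gcommg_eq1 x y : Defs.commg mul inv x y = e <-> mul x y = mul y x.
Proof.
rewrite /Defs.commg; split=> h.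
  have h2 := congr1 (mul (mul y x)) h; rewrite gmulg1 in h2; rewrite -h2.
  by rewrite !mulA -(mulA y x) gmulgV gmulg1 gmulgV mul1.
by rewrite -mulA h -mulA gmulKg mulV.
Qed.

Lemma gcomm1g y : Defs.commg mul inv e y = e.
Proof. by apply/gcommg_eq1; rewrite mul1 gmulg1. Qed.

End GroupAxioms.

Section Borel.
Context {X : topologicalType}.
Implicit Types A B : set X.

Lemma borel_open A : open A -> borel A.
Proof. by move=> oA; apply: sub_sigma_algebra. Qed.

Lemma borel0 : borel (set0 : set X).
Proof. exact: sigma_algebra0. Qed.

Lemma borelC A : borel A -> borel (~` A).
Proof. by move=> bA; rewrite -setTD; apply: sigma_algebraCD. Qed.

Lemma borelT : borel (setT : set X).
Proof. by rewrite -setC0; apply: borelC; exact: borel0. Qed.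

Lemma borel_closed A : closed A -> borel A.
Proof.
by move=> cA; rewrite -[A]setCK; apply: borelC; apply: borel_open; exact: closed_openC.
Qed.

Lemma borelU A B : borel A -> borel B -> borel (A `|` B).
Proof.
move=> bA bB; rewrite -bigcup2E; apply: sigma_algebra_bigcup => -[|[|i]] //=.
exact: borel0.
Qed.

Lemma borelI A B : borel A -> borel B -> borel (A `&` B).
Proof.
move=> bA bB; rewrite -[A `&` B]setCK setCI.
by apply: borelC; apply: borelU; apply: borelC.
Qed.

Lemma borelD A B : borel A -> borel B -> borel (A `\` B).
Proof. by move=> bA bB; apply: borelI => //; apply: borelC. Qed.

Lemma borel_big_setU (I : Type) (l : seq I) (F : I -> set X) :
  (forall i, borel (F i)) -> borel (\big[setU/set0]_(i <- l) F i).
Proof.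
move=> bF; elim: l => [|i l IH]; first by rewrite big_nil; exact: borel0.
by rewrite big_cons; apply: borelU.
Qed.

End Borel.

Lemma borel_preimage {X Y : topologicalType} (f : X -> Y) (B : set Y) :
  continuous f -> borel B -> borel (f @^-1` B).
Proof.
move=> cf; apply: (@smallest_sub _ _ _ [set B | borel (f @^-1` B)]).
  split => /=.
  - by rewrite preimage_set0; exact: borel0.
  - by move=> A bA /=; rewrite setTD -preimage_setC; exact: borelC.
  - by move=> F bF; rewrite preimage_bigcup; apply: sigma_algebra_bigcup.
by move=> A oA; apply: borel_open; apply: open_comp => // x _; apply: cf.
Qed.

Section HaarProbability.
Context {R : realType} {X : topologicalType} (mul : X -> X -> X)
  (mu : set X -> \bar R) (Hmu : haar_probability mul mu).
Implicit Types A B : set X.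

Lemma haar_finite_additive (F : nat -> set X) (k : nat) :
  (forall i, borel (F i)) -> trivIset setT F ->
  (forall i, (k <= i)%N -> F i = set0) ->
  mu (\bigcup_i F i) = (\sum_(0 <= i < k) mu (F i))%E.
Proof.
move=> bF tF F0.
have partial_sums_eventually_cst : (fun l => \sum_(0 <= i < l) mu (F i))%E @ \oo
    --> (\sum_(0 <= i < k) mu (F i))%E.
  apply: cvg_near_cst; exists k => // l /= kl.
  rewrite (big_cat_nat _ kl) //= [X in (_ + X)%E]big1_seq ?adde0 //.
  move=> i /andP[_]; rewrite mem_iota subnKC // => /andP[ki _].
  by rewrite F0 // (haar0 Hmu).
exact: (cvg_unique _ (haar_sigma_additive Hmu bF tF) partial_sums_eventually_cst).
Qed.

Lemma haarU A B : borel A -> borel B -> A `&` B = set0 ->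
  mu (A `|` B) = (mu A + mu B)%E.
Proof.
move=> bA bB AB; rewrite -bigcup2E (@haar_finite_additive _ 2).
- by rewrite !big_nat_recr //= big_nil add0e.
- by move=> [|[|i]] //=; exact: borel0.
- by rewrite -trivIset_bigcup2.
- by move=> [|[|i]].
Qed.

Lemma haar_fin_num A : borel A -> mu A \is a fin_num.
Proof.
move=> bA; rewrite ge0_fin_numE ?(haar_ge0 Hmu) //.
have : (mu A <= mu setT)%E.
  by rewrite -(setUv A) haarU ?setICr ?leeDl ?(haar_ge0 Hmu) //; apply: borelC.
by rewrite (haarT Hmu) => /le_lt_trans; apply; rewrite ltry.
Qed.

Definition prob A : R := fine (mu A).

Lemma probE A : borel A -> mu A = (prob A)%:E.
Proof. by move=> bA; rewrite /prob fineK // haar_fin_num. Qed.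

Lemma prob_ge0 A : borel A -> 0 <= prob A.
Proof. by move=> bA; rewrite -lee_fin -probE // (haar_ge0 Hmu). Qed.

Lemma prob0 : prob set0 = 0.
Proof. by rewrite /prob (haar0 Hmu). Qed.

Lemma probT : prob setT = 1.
Proof. by rewrite /prob (haarT Hmu). Qed.

Lemma probU A B : borel A -> borel B -> A `&` B = set0 ->
  prob (A `|` B) = prob A + prob B.
Proof.
move=> bA bB AB; apply/eqP; rewrite -eqe EFinD -!probE ?haarU //.
exact: borelU.
Qed.

Lemma probID A B : borel A -> borel B -> prob A = prob (A `&` B) + prob (A `\` B).
Proof.
move=> bA bB; rewrite -probU ?setUIDK //; [exact: borelI|exact: borelD|].
by rewrite setDE setICA -setIA setICr !setI0.
Qed.

Lemma probC A : borel A -> prob (~` A) = 1 - prob A.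
Proof.
by move=> bA; rewrite -probT (probID borelT bA) setTI setTD addrAC subrr add0r.
Qed.

Lemma le_prob A B : borel A -> borel B -> A `<=` B -> prob A <= prob B.
Proof.
move=> bA bB AB; rewrite (probID bB bA) setIidr // lerDl.
by apply: prob_ge0; exact: borelD.
Qed.

Lemma prob_le1 A : borel A -> prob A <= 1.
Proof. by move=> bA; rewrite -probT; apply: le_prob => //; exact: borelT. Qed.

Lemma prob_big_setU_cst (I : eqType) (l : seq I) (F : I -> set X) (q : R) :
  uniq l -> (forall i, borel (F i)) -> (forall i j, i != j -> F i `&` F j = set0) ->
  (forall i, prob (F i) = q) -> prob (\big[setU/set0]_(i <- l) F i) = q *+ size l.
Proof.
move=> ul bF dF Fq; elim: l ul => [|i l IH] /=; first by rewrite big_nil prob0.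
move=> /andP[il ul]; rewrite big_cons probU ?IH ?Fq ?mulrS //.
  exact: borel_big_setU.
rewrite big_distrr /= big1_seq // => j /andP[_ jl]; apply: dF.
by apply: contraNneq il => ->.
Qed.

Lemma prob_translate x A : borel A -> prob [set mul x y | y in A] = prob A.
Proof. by move=> bA; rewrite /prob (haar_left_invariant Hmu x bA). Qed.

Lemma prob_inner_approx A eps : hausdorff_space X -> borel A -> 0 < eps ->
  exists2 K, compact K /\ K `<=` A & prob A - eps < prob K.
Proof.
move=> hX bA eps0.
have : ((prob A - eps)%:E < mu A)%E by rewrite probE // lte_fin ltrBlDr ltrDl.
rewrite (haar_inner_regular Hmu bA) => /ereal_sup_gt [_ [K KA <-] ltK].
exists K => //; rewrite -lte_fin -probE //.
by apply: borel_closed; exact: compact_closed hX (proj1 KA).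
Qed.

End HaarProbability.

(* [compact_cover] is only stated for pointed spaces; any point of L will do. *)
Definition pointed_at (T : topologicalType) (x : T) : Type := T.
HB.instance Definition _ (T : topologicalType) (x : T) :=
  Topological.on (pointed_at x).
HB.instance Definition _ (T : topologicalType) (x : T) :=
  isPointed.Build (pointed_at x) x.

Lemma compact_finite_cover (T : topologicalType) (L : set T)
    (I : choiceType) (D : set I) (U : I -> set T) :
  compact L -> (forall i, D i -> open (U i)) -> L `<=` cover D U ->
  finite_subset_cover D U L.
Proof.
have [[x _]|/set0P/negP/negPn/eqP -> _ _ _] := pselect (L !=set0); last first.
  by exists finmap.fset0.
move=> cL; have : cover_compact (L : set (pointed_at x)) by rewrite -compact_cover.
by apply.
Qed.

Section TopologicalGroup.
Context {G : topologicalType} (mul : G -> G -> G) (inv : G -> G) (e : G)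
  (HG : compact_group mul inv e).

Lemma continuous_mul {Y : topologicalType} (f g : Y -> G) :
  continuous f -> continuous g -> continuous (fun y => mul (f y) (g y)).
Proof.
move=> cf cg y; apply: (@continuous2_cvg _ G G G _ _ f g mul).
- exact: (@cg_mul_cont G mul inv e HG (f y, g y)).
- exact: cf.
- exact: cg.
Qed.

Lemma continuous_inv {Y : topologicalType} (f : Y -> G) :
  continuous f -> continuous (fun y => inv (f y)).
Proof.
by move=> cf y; apply: continuous_comp; [exact: cf|exact: (@cg_inv_cont G mul inv e HG)].
Qed.

Lemma continuous_commg {Y : topologicalType} (f g : Y -> G) :
  continuous f -> continuous g ->
  continuous (fun y => Defs.commg mul inv (f y) (g y)).
Proof.
by move=> cf cg; do 3 apply: continuous_mul => //; apply: continuous_inv.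
Qed.

Lemma closed_set1 (g : G) : closed [set g].
Proof.
apply: accessible_closed_set1; apply: hausdorff_accessible; exact: cg_hausdorff HG.
Qed.

Lemma borel_fiber {Y : topologicalType} (f : Y -> G) (g : G) :
  continuous f -> borel [set y | f y = g].
Proof.
move=> cf; apply: (@borel_preimage _ _ f [set g] cf).
apply: borel_closed; exact: closed_set1.
Qed.

Lemma open_noncommuting (b : G) : open [set g | Defs.commg mul inv g b <> e].
Proof.
rewrite -[X in open X]/((fun g => Defs.commg mul inv g b) @^-1` ~` [set e]).
apply: open_comp.
  move=> g _; apply: continuous_commg => //; last exact: cst_continuous.
  by move=> x; exact: cvg_id.
apply: closed_openC; exact: closed_set1.
Qed.

End TopologicalGroup.

Section CommutatorTuples.
Context {G : topologicalType} (mul : G -> G -> G) (inv : G -> G) (e : G)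
  (HG : compact_group mul inv e) (n : nat).

Local Notation X := (power_group G n.+1).
Local Notation comm := (Defs.commg mul inv).

Let mulA := cg_mulA HG.
Let mul1 := cg_mul1 HG.
Let mulV := cg_mulV HG.

Fixpoint comm_upto (k : nat) (x : X) : G :=
  if k is k'.+1 then comm (comm_upto k' x) (x (inord k'.+1)) else x (inord 0).

Definition comm_upto_set (k : nat) : set X := [set x | comm_upto k x = e].

Lemma hausdorff_power : hausdorff_space X.
Proof.
exact: (@hausdorff_product _ (fun _ : 'I_n.+1 => G) (fun _ => cg_hausdorff HG)).
Qed.

Lemma continuous_coord (i : 'I_n.+1) : continuous (fun x : X => x i).
Proof. exact: (@proj_continuous _ (fun _ : 'I_n.+1 => G) i). Qed.

Lemma continuous_comm_upto k : continuous (comm_upto k).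
Proof.
elim: k => [|k IH] /=; first exact: continuous_coord.
by apply: (continuous_commg HG) => //; exact: continuous_coord.
Qed.

Lemma borel_comm_upto_set k : borel (comm_upto_set k).
Proof. by apply: (borel_fiber HG); exact: continuous_comm_upto. Qed.

Lemma comm_upto_set_sub k : comm_upto_set k `<=` comm_upto_set k.+1.
Proof.
move=> x; rewrite /comm_upto_set /= => ->.
exact: gcomm1g mulA mul1 mulV _.
Qed.

Lemma comm_upto_local k (x y : X) :
  (forall i : 'I_n.+1, (i <= k)%N -> x i = y i) -> comm_upto k x = comm_upto k y.
Proof.
have inord_le j : (val (inord j : 'I_n.+1) <= j)%N.
  by rewrite /inord /insubd; case: insubP => [u _ ->|].
elim: k => [|k IH] xy /=; first by apply: xy; exact: inord_le.
congr comm; last by apply: xy; exact: inord_le.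
by apply: IH => i ik; apply: xy; exact: leqW.
Qed.

Lemma comm_setE : @comm_set G mul inv e n = comm_upto_set n.
Proof.
have foldlE k (x : X) : foldl comm (x (inord 0)) [seq x (inord i) | i <- iota 1 k]
    = comm_upto k x.
  elim: k => [//|k IH].
  by rewrite -[k.+1]addn1 iotaD map_cat foldl_cat IH /= add1n addn1.
apply/seteqP; split => x; rewrite /comm_set /comm_upto_set /=;
  have -> : [seq x i | i <- enum 'I_n.+1] = [seq x (inord i) | i <- iota 0 n.+1]
    by rewrite -val_enum_ord -map_comp; apply: eq_map => i /=; rewrite inord_val.
  all: by rewrite /= foldlE.
Qed.

Definition single (j : nat) (a : G) : X :=
  fun i => if i == inord j then a else e.

Local Notation translate j a := (pmul mul (single j a)).

Lemma single_at j a (y : X) : translate j a y (inord j) = mul a (y (inord j)).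
Proof. by rewrite /pmul /single eqxx. Qed.

Lemma single_off j k a (y : X) : (inord k : 'I_n.+1) != inord j ->
  translate j a y (inord k) = y (inord k).
Proof. by move=> kj; rewrite /pmul /single (negbTE kj) mul1. Qed.

Lemma translate_singleK j a (y : X) : translate j a (translate j (inv a) y) = y.
Proof.
apply: funext => i; rewrite /pmul /single; case: eqP => _.
  by rewrite mulA (gmulgV mulA mul1 mulV) mul1.
by rewrite !mul1.
Qed.

Lemma comm_upto_translate j k a (y : X) : (k < j <= n)%N ->
  comm_upto k (translate j a y) = comm_upto k y.
Proof.
move=> /andP[kj jn]; apply: comm_upto_local => i ik.
rewrite /pmul /single; case: eqP => [ij|_]; last by rewrite mul1.
by move: (leq_ltn_trans ik kj); rewrite ij inordK ?ltnn.
Qed.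

End CommutatorTuples.

Section CommutingPairs.
Local Close Scope classical_set_scope.
Local Open Scope group_scope.
Variable gT : finGroupType.
Hypothesis center1 : forall z : gT, (forall g : gT, commute z g) -> z = 1.
Local Notation GG := [set: gT].

Lemma card_class_ge2 C : C \in classes GG -> C != 1 -> (2 <= #|C|)%N.
Proof.
move=> /imsetP[x _ ->]; rewrite classG_eq1 => x1.
rewrite ltnNge; apply: contra x1 => xG_le1; apply/eqP/center1 => g.
have [y xGy] : exists y, x ^: GG = [set y].
  apply/cards1P; rewrite eqn_leq xG_le1 card_gt0.
  by apply/set0Pn; exists x; exact: class_refl.
have /set1P xy : x \in [set y] by rewrite -xGy class_refl.
have : x ^ g \in x ^: GG by apply: imset_f; rewrite inE.
by rewrite xGy -xy => /set1P xgx; rewrite /commute conjgC xgx.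
Qed.

Hypothesis nontrivial : exists g : gT, g != 1.

Lemma classes_bound : (2 * #|classes GG| <= #|gT|)%N.
Proof.
set t := \sum_(C in classes GG | C != 1%g) 1%N.
have card_classes : #|classes GG| = t.+1.
  by rewrite -sum1_card (bigD1 1%g) ?classes1 //= add1n.
have card_gT : #|gT| = (1 + \sum_(C in classes GG | C != 1%g) #|C|)%N.
  by rewrite -cardsT -sum_card_class (bigD1 1%g) ?classes1 //= cards1.
have t_gt0 : (0 < t)%N.
  have := classes_gt1 GG; rewrite card_classes ltnS => ->.
  have [g g1] := nontrivial; apply/eqP => /setP/(_ g).
  by rewrite !inE (negPf g1).
(* a nontrivial class has at least two elements and its size divides |G| *)
have sum_ge : ((if odd #|gT| then 3 else 2) * t <=
    \sum_(C in classes GG | C != 1%g) #|C|)%N.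
  rewrite /t big_distrr /=; apply: leq_sum => C /andP[CG C1]; rewrite muln1.
  have C_ge2 := card_class_ge2 CG C1.
  case: ifP => // odd_gT.
  have : odd #|C|.
    move: CG => /imsetP[x _ ->]; apply: contraTT odd_gT; rewrite -!dvdn2 => /dvdn_trans.
    by apply; rewrite -index_cent1 -cardsT dvdn_indexg.
  by move: C_ge2; case: #|C| => [|[|[|]]].
rewrite card_classes; move: sum_ge; case: ifP => odd_gT sum_ge.
  by rewrite card_gT; lia.
have : (2 * t.+1 != #|gT| + 1)%N by apply/eqP => /(congr1 odd); rewrite oddD oddM odd_gT.
by rewrite card_gT; lia.
Qed.

Lemma card_commuting_pairs :
  #|[set p : gT * gT | p.1 * p.2 == p.2 * p.1]| = (#|classes GG| * #|gT|)%N.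
Proof.
have acts : [acts GG, on GG | conjg_action gT] by apply/actsP => x Gx y; rewrite !inE.
rewrite -cardsT -(Frobenius_Cauchy acts) -sum1_card.
rewrite (eq_bigl (fun p : gT * gT => true && (p.1 * p.2 == p.2 * p.1))); last first.
  by move=> p; rewrite inE.
rewrite -(pair_big_dep xpredT (fun a b => a * b == b * a) (fun _ _ => 1%N)) /=.
apply: eq_big => [a|a _]; first by rewrite inE.
rewrite -sum1_card; apply: eq_big => // b.
by rewrite inE afixJ cent_set1 cent1E inE /= eq_sym.
Qed.

Lemma commuting_pairs_bound :
  (2 * #|[set p : gT * gT | (p.1 * p.2 == p.2 * p.1)%g]| <= #|gT| * #|gT|)%N.
Proof. by rewrite card_commuting_pairs mulnA leq_mul2r classes_bound orbT. Qed.

End CommutingPairs.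

Record enum_group := EnumGroup {
  eg_sort : choiceType;
  eg_enum : seq eg_sort;
  eg_mul : eg_sort -> eg_sort -> eg_sort;
  eg_inv : eg_sort -> eg_sort;
  eg_one : eg_sort;
  eg_enumP : forall x, x \in eg_enum;
  eg_mulA : associative eg_mul;
  eg_mul1 : left_id eg_one eg_mul;
  eg_mulV : forall x, eg_mul (eg_inv x) x = eg_one }.

Definition enum_group_type (D : enum_group) : Type := seq_sub (eg_enum D).
HB.instance Definition _ (D : enum_group) := Finite.on (enum_group_type D).

Section EnumGroupType.
Variable D : enum_group.
Local Notation gT := (enum_group_type D).

Definition eg_elem (x : eg_sort D) : gT := SeqSub (@eg_enumP D x).

Definition eg_tmul (x y : gT) : gT := eg_elem (eg_mul (ssval x) (ssval y)).
Definition eg_tinv (x : gT) : gT := eg_elem (eg_inv (ssval x)).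

Lemma eg_tmulA : associative eg_tmul.
Proof. by move=> x y z; apply: val_inj; rewrite /= eg_mulA. Qed.
Lemma eg_tmul1 : left_id (eg_elem (eg_one D)) eg_tmul.
Proof. by move=> x; apply: val_inj; rewrite /= eg_mul1. Qed.
Lemma eg_tmulV : left_inverse (eg_elem (eg_one D)) eg_tinv eg_tmul.
Proof. by move=> x; apply: val_inj; rewrite /= eg_mulV. Qed.

HB.instance Definition _ := Finite_isGroup.Build gT eg_tmulA eg_tmul1 eg_tmulV.

End EnumGroupType.

Section CommutatorMeasure.
Context {R : realType} {G : topologicalType} (mul : G -> G -> G) (inv : G -> G)
  (e : G) (HG : compact_group mul inv e) (n : nat)
  (mu : set (power_group G n.+1) -> \bar R)
  (Hmu : haar_probability (@pmul G n.+1 mul) mu).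

Local Notation X := (power_group G n.+1).
Local Notation comm := (Defs.commg mul inv).
Local Notation c := (@comm_upto G mul inv n).
Local Notation P := (@comm_upto_set G mul inv e n).
Local Notation prob := (prob mu).
Local Notation translate j a := (pmul mul (@single G e n j a)).

Let mulA := cg_mulA HG.
Let mul1 := cg_mul1 HG.
Let mulV := cg_mulV HG.
Let commgE := gcommg_eq1 mulA mul1 mulV.
Let borelP k : borel (P k) := borel_comm_upto_set HG k.
Let continuous_c k : continuous (c k) := continuous_comm_upto HG (k := k).
Let mulg1 := gmulg1 mulA mul1 mulV.
Let hausG := cg_hausdorff HG.
Let hausX := hausdorff_power HG (n := n).

Lemma noncommuting_half k (kn : (k < n)%N) (Y : set G) (b : G) :
  borel Y -> (forall g, Y g -> comm g b <> e) ->
  2 * prob (P k.+1 `&` c k @^-1` Y) <= prob (c k @^-1` Y).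
Proof.
move=> bY Yb; set W := c k @^-1` Y; set A := P k.+1 `&` W.
have kkn : (k < k.+1 <= n)%N by rewrite ltnSn.
have bW : borel W by exact: borel_preimage.
have bA : borel A by exact: borelI.
have imageE : [set translate k.+1 b y | y in A] =
    W `&` [set x | comm (c k x) (mul (inv b) (x (inord k.+1))) = e].
  apply/seteqP; split.
  - move=> _ [y [Py Wy] <-]; split; first by rewrite /W /= comm_upto_translate.
    by rewrite /= comm_upto_translate // single_at (gmulKg mulA mul1 mulV).
  - move=> x [Wx Cx]; exists (translate k.+1 (inv b) x).
      split; last by rewrite /W /= comm_upto_translate.
      by rewrite /comm_upto_set /= comm_upto_translate // single_at.
    exact: translate_singleK.
have bimage : borel [set translate k.+1 b y | y in A].
  rewrite imageE; apply: borelI bW _; apply: (borel_fiber HG).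
  apply: (continuous_commg HG) => //.
  by apply: (continuous_mul HG); [exact: cst_continuous|exact: continuous_coord].
(* if both y_{k+1} and b y_{k+1} commute with c = c k y, then so does b *)
have disjoint : A `&` [set translate k.+1 b y | y in A] = set0.
  apply/seteqP; split => // x [[Px _] [y [Py Wy] yx]]; move: Px.
  rewrite -yx /comm_upto_set /= comm_upto_translate // single_at => /commgE byc.
  move: Py => /commgE yc; apply: (Yb _ Wy); apply/commgE.
  apply: (gmulgI mulA mul1 mulV (x := y (inord k.+1))).
  by rewrite -(mulA (c k y) b) byc -(mulA b (c k y)) yc mulA.
have : prob (A `|` [set translate k.+1 b y | y in A]) <= prob W.
  apply: (le_prob Hmu) => //; first exact: borelU.
  by move=> x [[]//|]; rewrite imageE => -[].
by rewrite (probU Hmu) // (prob_translate Hmu) //; lra.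
Qed.

Lemma noncommuting_cover_half k (kn : (k < n)%N) (bs : seq G) (Y : set G) :
  borel Y -> (forall g, Y g -> exists2 b, b \in bs & comm g b <> e) ->
  2 * prob (P k.+1 `&` c k @^-1` Y) <= prob (c k @^-1` Y).
Proof.
elim: bs Y => [|b bs IH] Y bY Ycover.
  have -> : c k @^-1` Y = set0 by apply/seteqP; split => // x /Ycover [].
  by rewrite setI0 (prob0 Hmu) mulr0.
set U := [set g | comm g b <> e].
have bU : borel U by apply: borel_open; exact: (open_noncommuting HG).
have bYU : borel (c k @^-1` (Y `&` U)) by apply: borel_preimage => //; exact: borelI.
have bYnU : borel (c k @^-1` (Y `\` U)) by apply: borel_preimage => //; exact: borelD.
have half_in := noncommuting_half kn (borelI bY bU) (fun g => @proj2 _ _).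
have half_out : 2 * prob (P k.+1 `&` c k @^-1` (Y `\` U)) <= prob (c k @^-1` (Y `\` U)).
  apply: IH => [|g [Yg nUg]]; first exact: borelD.
  have [b'] := Ycover g Yg; rewrite in_cons => /predU1P[->|b'bs] gb' //.
  by exists b'.
have disjoint : c k @^-1` (Y `&` U) `&` c k @^-1` (Y `\` U) = set0.
  by apply/seteqP; split => // x [[_ Ux] [_ nUx]].
have disjointP : (P k.+1 `&` c k @^-1` (Y `&` U)) `&` (P k.+1 `&` c k @^-1` (Y `\` U))
    = set0 by rewrite -setIIr disjoint setI0.
rewrite -(setUIDK Y U) preimage_setU setIUr !(probU Hmu) //.
- lra.
- exact: borelI (borelP _) bYU.
- exact: borelI (borelP _) bYnU.
Qed.

Hypothesis center1 : forall z : G, (forall g : G, mul z g = mul g z) -> z = e.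

Lemma noncentral_compact_half k (kn : (k < n)%N) (L : set G) :
  compact L -> ~ L e -> 2 * prob (P k.+1 `&` c k @^-1` L) <= prob (c k @^-1` L).
Proof.
move=> cL Le; set U := fun b => [set g | comm g b <> e].
have cover_L : L `<=` cover setT U.
  move=> g Lg; have : exists b, comm g b <> e.
    apply/existsNP => gc; apply: Le.
    by rewrite -(center1 (fun h => proj1 (commgE g h) (gc h))).
  by move=> [b gb]; exists b.
have [D _ DL] := compact_finite_cover cL (fun b _ => open_noncommuting HG b) cover_L.
apply: (noncommuting_cover_half kn (bs := finmap.enum_fset D)).
  by apply: borel_closed; exact: compact_closed hausG cL.
by move=> g /DL [b Db gb]; exists b.
Qed.

Lemma comm_upto_set_half k (kn : (k < n)%N) :
  2 * prob (P k.+1 `&` ~` P k) <= prob (~` P k).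
Proof.
set Q := ~` P k; have bQ : borel Q by exact: borelC.
apply/ler_addgt0Pr => eps eps0.
have [K [cK KQ] approxK] := prob_inner_approx Hmu hausX bQ eps0.
have bK : borel K by apply: borel_closed; exact: compact_closed hausX cK.
have cL : compact (c k @` K).
  by apply: continuous_compact => //; exact: continuous_subspaceT.
set W := c k @^-1` (c k @` K).
have bW : borel W.
  by apply: borel_preimage => //; apply: borel_closed; exact: compact_closed hausG cL.
have KW : K `<=` W by move=> x Kx; exists x.
have WQ : W `<=` Q.
  by move=> x [y Ky yx]; rewrite /Q /comm_upto_set /= -yx; exact: KQ.
have halfW : 2 * prob (P k.+1 `&` W) <= prob W.
  by apply: noncentral_compact_half => // -[x Kx]; exact: KQ.
have := le_prob Hmu bK bW KW.
have : prob Q = prob W + prob (Q `\` W) by rewrite (probID Hmu bQ bW) setIidr.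
have : prob (P k.+1 `&` Q) <= prob (P k.+1 `&` W) + prob (Q `\` W).
  have bPQ : borel (P k.+1 `&` Q) by exact: borelI (borelP _) bQ.
  rewrite (probID Hmu bPQ bW); apply: lerD; apply: (le_prob Hmu).
  - exact: borelI bPQ bW.
  - exact: borelI (borelP _) bW.
  - by move=> x [[Px _] Wx].
  - exact: borelD bPQ bW.
  - exact: borelD bQ bW.
  - by move=> x [[_ Qx] nWx].
lra.
Qed.

Lemma comm_upto_set_step k : (k < n)%N ->
  prob (P k.+1) <= prob (P k) + (1 - prob (P k)) / 2.
Proof.
move=> kn; have := comm_upto_set_half kn.
rewrite (probC Hmu) // (probID Hmu (borelP k.+1) (borelP k)).
rewrite [P k.+1 `&` P k]setIidr ?setDE; last first.
  exact: (comm_upto_set_sub HG).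
lra.
Qed.

Lemma prob_fiber0 (g : G) : prob [set x : X | x (inord 0) = g] = prob (P 0).
Proof.
have -> : [set x : X | x (inord 0) = g] = [set translate 0 g y | y in P 0].
  apply/seteqP; split => x.
    move=> x0; exists (translate 0 (inv g) x); last exact: translate_singleK.
    by rewrite /comm_upto_set /= single_at x0 mulV.
  by move=> [y + <-]; rewrite /comm_upto_set /= single_at => ->; rewrite mulg1.
exact: prob_translate.
Qed.

Lemma prob_comm_upto_set0_infinite : ~ finite_set [set: G] -> prob (P 0) = 0.
Proof.
move=> Ginf.
(* points have equal mass, so M of them have mass at most 1 *)
have bound M : M%:R * prob (P 0) <= 1.
  have [B _ MB] := infinite_set_fset M Ginf.
  have fiberB : borel (\big[setU/set0]_(g <- finmap.enum_fset B)
      [set x : X | x (inord 0) = g]).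
    by apply: borel_big_setU => g; apply: (borel_fiber HG); exact: continuous_coord.
  apply: le_trans (prob_le1 Hmu fiberB).
  rewrite (prob_big_setU_cst Hmu (q := prob (P 0))) ?finmap.fset_uniq //.
  - rewrite -[prob (P 0) *+ _]mulr_natl.
    by apply: ler_wpM2r; [exact: (prob_ge0 Hmu)|rewrite ler_nat].
  - by move=> g; apply: (borel_fiber HG); exact: continuous_coord.
  - move=> g h gh; apply/seteqP; split => // x [/= xg xh].
    by move: gh; rewrite -xg -xh eqxx.
  - exact: prob_fiber0.
apply/eqP; rewrite eq_le (prob_ge0 Hmu) // andbT; apply/ler_addgt0Pr => eps eps0.
set M := (Num.truncn eps^-1).+1.
have Meps : 1 < M%:R * eps by rewrite -ltr_pdivrMr // div1r truncnS_gt.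
have M0 : 0 < M%:R :> R by rewrite ltr0Sn.
rewrite add0r; apply/ltW; rewrite -(ltr_pM2l M0).
exact: le_lt_trans (bound M) Meps.
Qed.

Hypothesis n_gt0 : (0 < n)%N.

Definition cylinder (a b : G) : set X :=
  [set x | x (inord 0) = a /\ x (inord 1) = b].

Lemma borel_cylinder a b : borel (cylinder a b).
Proof. by apply: borelI; apply: (borel_fiber HG); exact: continuous_coord. Qed.

Lemma prob_cylinder a b : prob (cylinder a b) = prob (cylinder e e).
Proof.
have i10 : (inord 1 : 'I_n.+1) != inord 0.
  by apply/eqP => /(congr1 val); rewrite /= !inordK.
have move0 : [set translate 0 a y | y in cylinder e b] = cylinder a b.
  apply/seteqP; split => x.
    move=> [y [y0 y1] <-].
    by rewrite /cylinder /= single_at y0 mulg1 (single_off HG).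
  move=> [x0 x1]; exists (translate 0 (inv a) x); last exact: translate_singleK.
  by rewrite /cylinder /= single_at x0 mulV (single_off HG).
have move1 : [set translate 1 b y | y in cylinder e e] = cylinder e b.
  apply/seteqP; split => x.
    move=> [y [y0 y1] <-].
    by rewrite /cylinder /= single_at y1 mulg1 (single_off HG) // eq_sym.
  move=> [x0 x1]; exists (translate 1 (inv b) x); last exact: translate_singleK.
  by rewrite /cylinder /= single_at x1 mulV (single_off HG) // eq_sym.
rewrite -move0 (prob_translate Hmu); last exact: borel_cylinder.
by rewrite -move1 (prob_translate Hmu); last exact: borel_cylinder.
Qed.

Lemma prob_cylinders (T : finType) (f : T -> G) (A : {set T * T}) : injective f ->
  prob (\big[setU/set0]_(p <- enum A) cylinder (f p.1) (f p.2))
  = prob (cylinder e e) *+ #|A|.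
Proof.
move=> finj; rewrite cardE.
rewrite (prob_big_setU_cst Hmu (q := prob (cylinder e e))) ?enum_uniq //.
- by move=> p; exact: borel_cylinder.
- move=> [a b] [a' b'] pp'; apply/seteqP; split => // x [[/= xa xb] [xa' xb']].
  have [aa' bb'] : a = a' /\ b = b'.
    by split; apply: finj; rewrite -?xa -?xa' -?xb -?xb'.
  by move: pp'; rewrite aa' bb' eqxx.
- by move=> p; exact: prob_cylinder.
Qed.

Lemma big_cylinderP (T : finType) (f : T -> G) (A : {set T * T}) (x : X) :
  (\big[setU/set0]_(p <- enum A) cylinder (f p.1) (f p.2)) x <->
  exists2 p, p \in A & cylinder (f p.1) (f p.2) x.
Proof.
rewrite -bigcup_seq; split=> -[p]; rewrite /= ?mem_enum => Ap Px; exists p => //.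
by rewrite /= mem_enum.
Qed.

Hypothesis nontrivial : exists g : G, g <> e.

Lemma prob_comm_upto_set1_finite : finite_set [set: G] -> prob (P 1) <= 1 / 2.
Proof.
move=> /finite_seqP [s sE].
have sP g : g \in s by have : [set` s] g by rewrite -sE.
pose D := EnumGroup sP mulA mul1 mulV; pose gT : finGroupType := enum_group_type D.
have center1' (z : gT) : (forall g, commute z g) -> z = 1%g.
  move=> zc; apply: val_inj; apply: center1 => g.
  by have /(congr1 val) := zc (@eg_elem D g).
have nontrivial' : exists g : gT, g != 1%g.
  have [g g1] := nontrivial; exists (@eg_elem D g).
  by apply: contra_notN g1 => /eqP /(congr1 val).
pose f (x : gT) : G := ssval x.
have finj : injective f by exact: val_inj.
set A := [set p : gT * gT | (p.1 * p.2 == p.2 * p.1)%g]%SET.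
have coverT :
    setT = \big[setU/set0]_(p <- enum [set: gT * gT]%SET) cylinder (f p.1) (f p.2).
  apply/seteqP; split=> [x _|//]; apply/big_cylinderP.
  by exists (@eg_elem D (x (inord 0)), @eg_elem D (x (inord 1))).
have coverP : P 1 = \big[setU/set0]_(p <- enum A) cylinder (f p.1) (f p.2).
  apply/seteqP; split => x.
    move=> /commgE x01; apply/big_cylinderP.
    exists (@eg_elem D (x (inord 0)), @eg_elem D (x (inord 1))) => //.
    by rewrite /A inE; apply/eqP/val_inj.
  move=> /big_cylinderP [[a b]]; rewrite /A inE => /eqP /(congr1 val) ab [/= xa xb].
  by apply/commgE; rewrite xa xb.
have pairs_le : (2 * #|A|)%:R <= (#|gT| * #|gT|)%:R :> R.
  by rewrite ler_nat; exact: commuting_pairs_bound center1' nontrivial'.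
have q0 : 0 <= prob (cylinder e e) by apply: (prob_ge0 Hmu); exact: borel_cylinder.
have total := probT Hmu.
rewrite coverT prob_cylinders // cardsT card_prod -mulr_natr in total.
have := ler_wpM2l q0 pairs_le; rewrite total natrM coverP prob_cylinders //.
rewrite -[_ *+ #|A|]mulr_natr; lra.
Qed.

Lemma prob_comm_upto_set1 : prob (P 1) <= 1 / 2.
Proof.
have [Gfin|Ginf] := pselect (finite_set [set: G]).
  exact: prob_comm_upto_set1_finite.
have := comm_upto_set_step n_gt0.
by rewrite prob_comm_upto_set0_infinite //; lra.
Qed.

Lemma prob_comm_upto_set_le k : (k < n)%N -> prob (P k.+1) <= 1 - (2 ^+ k.+1)^-1.
Proof.
elim: k => [_|k IH kn]; first by rewrite expr1; have := prob_comm_upto_set1; lra.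
have := comm_upto_set_step kn; have := IH (ltnW kn).
rewrite [2 ^+ k.+2]exprS invfM.
have : 0 < (2 ^+ k.+1)^-1 :> R by rewrite invr_gt0 exprn_gt0.
lra.
Qed.

End CommutatorMeasure.

Theorem corollary4p2 (R : realType) (G : topologicalType)
    (mul : G -> G -> G) (inv : G -> G) (e : G) (n : nat)
    (hn : (1 <= n)%N)
    (HG : compact_group mul inv e)
    (Hnontriv : exists g : G, g <> e)
    (Hcenter : forall z : G, (forall g : G, mul z g = mul g z) -> z = e)
    (mu : set (power_group G n.+1) -> \bar R)
    (Hmu : haar_probability (@pmul G n.+1 mul) mu) :
  (mu (@comm_set G mul inv e n) <= ((2 ^+ n - 1) / 2 ^+ n)%:E)%E.
Proof.
case: n hn mu Hmu => // k _ mu Hmu.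
rewrite comm_setE (probE Hmu (borel_comm_upto_set HG _)) lee_fin.
rewrite mulrBl divff ?expf_neq0 // mul1r.
by have := prob_comm_upto_set_le HG Hmu Hcenter (ltn0Sn k) Hnontriv (ltnSn k).
Qed.
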